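(* For all integers $t\ge0$ and $k\ge1$, \[m(2^{k+2}t+2^{k+1}-2)\ge m(t)+\frac{k}{2^k}.\]
   Context: $s(n)$ is the number of $1$s in the binary expansion of $n\ge0$; $\delta(j,t)=\lim_{N\to\infty}\frac1N|\{0\le n<N: s(n+t)-s(n)=j\}|$ for $j\in\mathbb Z$, a probability distribution on $\mathbb Z$, and $\kappa_j(t)$ denotes its $j$-th cumulant ($\log\sum_k\delta(k,t)e^{2\pi ik\vartheta}=\sum_{j\ge0}\frac{\kappa_j(t)}{j!}(2\pi i\vartheta)^j$ near $\vartheta=0$). Set $D(t)=\kappa_2(t)-\kappa_3(t)/3$ and $m(t)=\min\bigl(D(t),D(t+1)\bigr)$. *)

From Stdlib Require Import Reals ZArith List Lia Lra.
From Coquelicot Require Import Coquelicot.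
Open Scope R_scope.

Fixpoint pos_popcount (p : positive) : nat :=
  match p with
  | xH => 1%nat
  | xO q => pos_popcount q
  | xI q => S (pos_popcount q)
  end.

Definition s (n : nat) : nat :=
  match N.of_nat n with
  | N0 => 0%nat
  | Npos p => pos_popcount p
  end.

Definition count_diff (j : Z) (t N : nat) : nat :=
  length (filter (fun n => Z.eqb (Z.of_nat (s (n + t)) - Z.of_nat (s n)) j)
                 (seq 0 N)).

Definition delta (j : Z) (t : nat) : R :=
  real (Lim_seq (fun N => INR (count_diff j t N) / INR N)).

(* r-th moment of the distribution delta(.,t) on Z:
   sum_{j in Z} delta(j,t) j^r, as the limit of symmetric partial sums *)
Definition moment (r : nat) (t : nat) : R :=
  real (Lim_seq (fun M =>
    sum_f_R0 (fun i => delta (Z.of_nat i - Z.of_nat M) t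
                        * (IZR (Z.of_nat i - Z.of_nat M)) ^ r) (2 * M))).

(* cumulants kappa_2, kappa_3 of delta(.,t), expressed through the moments
   (coefficients of the log-characteristic function expansion):
   kappa_2 = m2 - m1^2,  kappa_3 = m3 - 3 m2 m1 + 2 m1^3 *)
Definition kappa2 (t : nat) : R := moment 2 t - (moment 1 t) ^ 2.
Definition kappa3 (t : nat) : R :=
  moment 3 t - 3 * moment 2 t * moment 1 t + 2 * (moment 1 t) ^ 3.

Definition D (t : nat) : R := kappa2 t - kappa3 t / 3.
Definition m (t : nat) : R := Rmin (D t) (D (S t)).

From Stdlib Require Import Reals ZArith NArith List Lia Lra.
From Coquelicot Require Import Coquelicot.
Open Scope R_scope.

(** Splitting [n] by parity, [s(2n) = s(n)] and [s(2n+1) = s(n) + 1] give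
    [delta(j,2u) = delta(j,u)] and [delta(j,2u+1) = (delta(j-1,u) + delta(j+1,u+1))/2].
    Since [delta(j,t) = 0] for [j > t] and [delta(-n,t) = O(2^-n)], every moment of order
    at most 3 exists and inherits these recursions.  Hence the mean is 0 and, writing
    [A = kappa_2], both [A] and [D] are invariant under doubling while
    [A(2u+1) = (A(u) + A(u+1))/2 + 1] and
    [D(2u+1) = (D(u) + D(u+1))/2 + 1 - (A(u) - A(u+1))/2]; in particular
    [A(t) - A(t+1) <= 2].
    Along [x_i = 2^(i+1) t + 2^i - 1] one has [x_(i+1) = 2 x_i + 1] and
    [x_i + 1 = 2^i (2t+1)], so the recursions become affine in [i] and solve to
    [D(x_i) = D(2t+1) + (D(t) - D(2t+1) - i beta)/2^i] with
    [beta = (A(t) - A(t+1))/2 - 3 <= -2], whence [D(x_i) >= m(t) + 2i/2^i].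
    Finally [2^(k+2) t + 2^(k+1) - 2 = 2 x_k] and its successor is [x_(k+1)]. *)

(** * Binary digit sums and difference counts *)

Lemma binary_ind (P : nat -> Prop) :
  P 0%nat -> P 1%nat ->
  (forall u, P u -> P (2 * u)%nat) ->
  (forall u, (1 <= u)%nat -> P u -> P (u + 1)%nat -> P (2 * u + 1)%nat) ->
  forall t, P t.
Proof.
  intros H0 H1 Heven Hodd t. induction t as [t IH] using lt_wf_ind.
  destruct t as [|[|t]]; auto.
  destruct (Nat.Even_or_Odd (S (S t))) as [[u Hu]|[u Hu]]; rewrite Hu.
  - apply Heven, IH; lia.
  - apply Hodd; [lia | apply IH; lia | apply IH; lia].
Qed.

Lemma s_double n : s (2 * n) = s n.
Proof. unfold s. rewrite Nat2N.inj_mul. destruct (N.of_nat n); reflexivity. Qed.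

Lemma s_double_add1 n : s (2 * n + 1) = S (s n).
Proof.
  unfold s. rewrite Nat2N.inj_add, Nat2N.inj_mul. destruct (N.of_nat n); reflexivity.
Qed.

Lemma s_succ_le n : (s (S n) <= S (s n))%nat.
Proof.
  induction n as [n IH] using lt_wf_ind.
  destruct (Nat.Even_or_Odd n) as [[k ->]|[k ->]].
  - replace (S (2 * k)) with (2 * k + 1)%nat by lia.
    rewrite s_double_add1, s_double. lia.
  - replace (S (2 * k + 1)) with (2 * S k)%nat by lia.
    rewrite s_double, s_double_add1. specialize (IH k). lia.
Qed.

Lemma s_add_le n t : (s (n + t) <= s n + t)%nat.
Proof.
  induction t as [|t IH]; [rewrite Nat.add_0_r; lia|].
  rewrite Nat.add_succ_r. pose proof (s_succ_le (n + t)). lia.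
Qed.

Definition has_diff (j : Z) (t n : nat) : bool :=
  Z.eqb (Z.of_nat (s (n + t)) - Z.of_nat (s n)) j.

Lemma count_diff_S j t N :
  count_diff j t (S N) = (count_diff j t N + if has_diff j t N then 1 else 0)%nat.
Proof.
  unfold count_diff. rewrite seq_S, filter_app, length_app. simpl.
  unfold has_diff. destruct (Z.eqb _ j); simpl; lia.
Qed.

Lemma count_diff_le j t N : (count_diff j t N <= N)%nat.
Proof.
  induction N; [reflexivity|].
  rewrite count_diff_S. destruct (has_diff j t N); lia.
Qed.

Lemma count_diff_add j t a b :
  (count_diff j t a <= count_diff j t (a + b) <= count_diff j t a + b)%nat.
Proof.
  induction b; [rewrite Nat.add_0_r; lia|].
  rewrite Nat.add_succ_r, count_diff_S. destruct (has_diff j t (a + b)); lia.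
Qed.

Ltac case_eqb :=
  repeat match goal with |- context [Z.eqb ?a ?b] => destruct (Z.eqb_spec a b) end;
  cbv beta iota; lia.

Lemma count_diff_double j t N : count_diff j (2 * t) (2 * N) = (2 * count_diff j t N)%nat.
Proof.
  induction N as [|N IH]; [reflexivity|].
  replace (2 * S N)%nat with (S (S (2 * N))) by lia.
  rewrite !count_diff_S, IH. unfold has_diff.
  replace (S (2 * N) + 2 * t)%nat with (2 * (N + t) + 1)%nat by lia.
  replace (S (2 * N)) with (2 * N + 1)%nat by lia.
  replace (2 * N + 2 * t)%nat with (2 * (N + t))%nat by lia.
  rewrite !s_double_add1, !s_double. case_eqb.
Qed.

Lemma count_diff_double_add1 j t N :
  count_diff j (2 * t + 1) (2 * N) = (count_diff (j - 1) t N + count_diff (j + 1) (t + 1) N)%nat.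
Proof.
  induction N as [|N IH]; [reflexivity|].
  replace (2 * S N)%nat with (S (S (2 * N))) by lia.
  rewrite !count_diff_S, IH. unfold has_diff.
  replace (S (2 * N) + (2 * t + 1))%nat with (2 * (N + (t + 1)))%nat by lia.
  replace (S (2 * N)) with (2 * N + 1)%nat by lia.
  replace (2 * N + (2 * t + 1))%nat with (2 * (N + t) + 1)%nat by lia.
  rewrite !s_double_add1, !s_double. case_eqb.
Qed.

Lemma count_diff_0 j N : count_diff j 0 N = if Z.eqb j 0 then N else 0%nat.
Proof.
  induction N as [|N IH]; [destruct (Z.eqb j 0); reflexivity|].
  rewrite count_diff_S, IH. unfold has_diff. rewrite Nat.add_0_r, Z.sub_diag. case_eqb.
Qed.

Lemma count_diff_gt j t N : (Z.of_nat t < j)%Z -> count_diff j t N = 0%nat.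
Proof.
  intros Hj. induction N as [|N IH]; [reflexivity|].
  rewrite count_diff_S, IH. unfold has_diff. pose proof (s_add_le N t). case_eqb.
Qed.

(* [s(n+1) - s(n) = 1 - i] exactly when [n + 1] has 2-adic valuation [i]. *)
Lemma count_diff_1 i q : count_diff (1 - Z.of_nat i) 1 (2 ^ (i + 1) * q) = q.
Proof.
  revert q. induction i as [|i IH]; intro q.
  - change (count_diff 1 (2 * 0 + 1) (2 * q) = q).
    rewrite count_diff_double_add1, count_diff_0, (count_diff_gt (1 + 1)) by (simpl; lia).
    simpl; lia.
  - replace (2 ^ (S i + 1) * q)%nat with (2 * (2 ^ (i + 1) * q))%nat
      by (rewrite !Nat.pow_add_r; simpl; lia).
    change 1%nat with (2 * 0 + 1)%nat at 1.
    rewrite count_diff_double_add1, count_diff_0.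
    replace (1 - Z.of_nat (S i) + 1)%Z with (1 - Z.of_nat i)%Z by lia.
    rewrite IH. case_eqb.
Qed.

(** * The densities [delta] *)

Definition freq (j : Z) (t N : nat) : R := INR (count_diff j t N) / INR N.

Lemma freq_bounds j t N : 0 <= freq j t N <= 1.
Proof.
  unfold freq. destruct N as [|N].
  - simpl. rewrite Rdiv_0_r. lra.
  - pose proof (lt_0_INR (S N) ltac:(lia)). split.
    + apply Rdiv_le_0_compat; [apply pos_INR | lra].
    + apply Rle_div_l; [lra|]. rewrite Rmult_1_l. apply le_INR, count_diff_le.
Qed.

Lemma is_lim_seq_scal_fin (u : nat -> R) (a l : R) :
  is_lim_seq u l -> is_lim_seq (fun n => a * u n) (a * l).
Proof. apply is_lim_seq_scal_l. Qed.

Lemma is_lim_seq_dominated_0 (u w : nat -> R) (B : R) :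
  (forall n, Rabs (u n) <= B * w n) -> is_lim_seq w 0 -> is_lim_seq u 0.
Proof.
  intros Hu Hw. apply is_lim_seq_abs_0.
  apply is_lim_seq_le_le with (fun _ => 0) (fun n => B * w n).
  - intros n. split; [apply Rabs_pos | apply Hu].
  - apply is_lim_seq_const.
  - replace 0 with (B * 0) by ring. apply is_lim_seq_scal_fin, Hw.
Qed.

Lemma Rabs_div_sub_div_le (a b x y : R) :
  0 < y <= x -> 0 <= b <= y -> 0 <= a - b <= x - y ->
  Rabs (a / x - b / y) <= (x - y) / x.
Proof.
  intros Hy Hb Hab.
  replace (a / x - b / y) with (((a - b) * y - b * (x - y)) / (x * y)) by (field; lra).
  rewrite Rabs_div, (Rabs_right (x * y)) by nra.
  apply Rle_div_l; [nra|].
  replace ((x - y) / x * (x * y)) with ((x - y) * y) by (field; lra).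
  apply Rabs_le. split; nra.
Qed.

Lemma is_lim_seq_ratio_multiples (c : nat -> nat) (K : nat) (l : R) :
  (1 <= K)%nat ->
  (forall a, c a <= a)%nat ->
  (forall a b, c a <= c (a + b) <= c a + b)%nat ->
  is_lim_seq (fun q => INR (c (K * q)%nat) / INR (K * q)) l ->
  is_lim_seq (fun N => INR (c N) / INR N) l.
Proof.
  intros HK Hle Hadd Hlim.
  set (r N := INR (c N) / INR N).
  set (q N := (N / K)%nat).
  assert (Hsub : is_lim_seq (fun N => r (K * q N)%nat) l).
  { apply (is_lim_seq_subseq (fun p => r (K * p)%nat)); [|exact Hlim].
    intros P [M HM]. exists (K * M)%nat. intros N HN. apply HM.
    apply Nat.div_le_lower_bound; lia. }
  assert (Hgap : is_lim_seq (fun N => r N - r (K * q N)%nat) 0).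
  { apply is_lim_seq_abs_0.
    apply is_lim_seq_le_le_loc with (fun _ => 0) (fun N => INR K * / INR N).
    - exists K. intros N HN. split; [apply Rabs_pos|].
      pose proof (Nat.div_mod N K ltac:(lia)) as HN_eq. change (N / K)%nat with (q N) in HN_eq.
      pose proof (Nat.mod_upper_bound N K ltac:(lia)).
      assert (Hq : (1 <= q N)%nat) by (apply Nat.div_le_lower_bound; lia).
      pose proof (Hadd (K * q N)%nat (N mod K)) as Hc. rewrite <- HN_eq in Hc.
      assert (HKN : INR N - INR (K * q N) <= INR K).
      { rewrite <- minus_INR by lia. apply le_INR. lia. }
      assert (HN0 : 0 < INR N) by (apply lt_0_INR; lia).
      eapply Rle_trans.
      + apply Rabs_div_sub_div_le.
        * split; [apply lt_0_INR; nia | apply le_INR; lia].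
        * split; [apply pos_INR | apply le_INR, Hle].
        * rewrite <- !minus_INR by lia. split; [apply pos_INR | apply le_INR; lia].
      + apply Rmult_le_compat_r; [left; apply Rinv_0_lt_compat|]; lra.
    - apply is_lim_seq_const.
    - replace (Finite 0) with (Rbar_mult (INR K) (Rbar_inv p_infty)) by (simpl; f_equal; ring).
      apply is_lim_seq_scal_l, is_lim_seq_inv; [apply is_lim_seq_INR | discriminate]. }
  replace l with (0 + l) by ring.
  apply is_lim_seq_ext with (fun N => (r N - r (K * q N)%nat) + r (K * q N)%nat);
    [intros; unfold r; ring|].
  apply is_lim_seq_plus'; assumption.
Qed.

Lemma freq_lim_multiples j t K (l : R) : (1 <= K)%nat ->
  is_lim_seq (fun q => freq j t (K * q)) l -> is_lim_seq (freq j t) l.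
Proof.
  intros HK. apply is_lim_seq_ratio_multiples; auto.
  - apply count_diff_le.
  - apply count_diff_add.
Qed.

Lemma freq_double j t q : freq j (2 * t) (2 * q) = freq j t q.
Proof.
  unfold freq. rewrite count_diff_double, !mult_INR.
  destruct (Req_dec (INR q) 0) as [->|Hq].
  - rewrite Rmult_0_r, !Rdiv_0_r. reflexivity.
  - simpl. field. auto.
Qed.

Lemma freq_double_add1 j t q :
  freq j (2 * t + 1) (2 * q) = / 2 * freq (j - 1) t q + / 2 * freq (j + 1) (t + 1) q.
Proof.
  unfold freq. rewrite count_diff_double_add1, plus_INR, mult_INR.
  destruct (Req_dec (INR q) 0) as [->|Hq].
  - rewrite Rmult_0_r, !Rdiv_0_r. ring.
  - simpl. field. auto.
Qed.

Lemma freq_double_lim j u (l : R) :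
  is_lim_seq (freq j u) l -> is_lim_seq (freq j (2 * u)) l.
Proof.
  intros H. apply (freq_lim_multiples _ _ 2); [lia|].
  apply is_lim_seq_ext with (freq j u); [intros; symmetry; apply freq_double | exact H].
Qed.

Lemma freq_double_add1_lim j u (l1 l2 : R) :
  is_lim_seq (freq (j - 1) u) l1 -> is_lim_seq (freq (j + 1) (u + 1)) l2 ->
  is_lim_seq (freq j (2 * u + 1)) (/ 2 * l1 + / 2 * l2).
Proof.
  intros H1 H2. apply (freq_lim_multiples _ _ 2); [lia|].
  apply is_lim_seq_ext with (fun q => / 2 * freq (j - 1) u q + / 2 * freq (j + 1) (u + 1) q);
    [intros; symmetry; apply freq_double_add1|].
  apply is_lim_seq_plus'; apply is_lim_seq_scal_fin; assumption.
Qed.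

Lemma freq_0_lim j : is_lim_seq (freq j 0) (Finite (if Z.eqb j 0 then 1 else 0)).
Proof.
  assert (H : forall N, (1 <= N)%nat -> freq j 0 N = if Z.eqb j 0 then 1 else 0).
  { intros N HN. unfold freq. rewrite count_diff_0. pose proof (lt_0_INR N ltac:(lia)).
    destruct (Z.eqb j 0); simpl; field; lra. }
  apply is_lim_seq_ext_loc with (fun _ => if Z.eqb j 0 then 1 else 0);
    [|apply is_lim_seq_const].
  exists 1%nat. intros N HN. symmetry. apply H, HN.
Qed.

Lemma freq_gt_lim j t : (Z.of_nat t < j)%Z -> is_lim_seq (freq j t) 0.
Proof.
  intros Hj. apply is_lim_seq_ext with (fun _ => 0); [|apply is_lim_seq_const].
  intros N. unfold freq. rewrite count_diff_gt by exact Hj. simpl. unfold Rdiv. ring.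
Qed.

Lemma freq_1_lim i : is_lim_seq (freq (1 - Z.of_nat i) 1) (/ 2 ^ (i + 1)).
Proof.
  assert (Hpos : (1 <= 2 ^ (i + 1))%nat) by (pose proof (Nat.pow_nonzero 2 (i + 1)); lia).
  apply (freq_lim_multiples _ _ _ _ Hpos).
  apply is_lim_seq_ext_loc with (fun _ => / 2 ^ (i + 1)); [|apply is_lim_seq_const].
  exists 1%nat. intros q Hq. unfold freq.
  rewrite count_diff_1, mult_INR, pow_INR. replace (INR 2) with 2 by (simpl; lra).
  field. split; [apply not_0_INR; lia | apply pow_nonzero; lra].
Qed.

Lemma freq_cvg t : forall j, exists l : R, is_lim_seq (freq j t) l.
Proof.
  induction t as [| | u IH | u _ IH1 IH2] using binary_ind; intro j.
  - eexists. apply freq_0_lim.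
  - destruct (Z_lt_le_dec 1 j) as [Hj|Hj].
    + exists 0. apply freq_gt_lim. exact Hj.
    + exists (/ 2 ^ (Z.to_nat (1 - j) + 1)).
      replace j with (1 - Z.of_nat (Z.to_nat (1 - j)))%Z at 1 by lia.
      apply freq_1_lim.
  - destruct (IH j) as [l Hl]. exists l. apply freq_double_lim, Hl.
  - destruct (IH1 (j - 1)%Z) as [l1 H1], (IH2 (j + 1)%Z) as [l2 H2].
    eexists. apply freq_double_add1_lim; eassumption.
Qed.

Lemma delta_eq j t (l : R) : is_lim_seq (freq j t) l -> delta j t = l.
Proof. intros H. unfold delta. fold (freq j t). rewrite (is_lim_seq_unique _ _ H). reflexivity. Qed.

Lemma delta_spec j t : is_lim_seq (freq j t) (delta j t).
Proof. destruct (freq_cvg t j) as [l Hl]. rewrite (delta_eq _ _ _ Hl). exact Hl. Qed.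

Lemma delta_double j u : delta j (2 * u) = delta j u.
Proof. apply delta_eq, freq_double_lim, delta_spec. Qed.

Lemma delta_double_add1 j u :
  delta j (2 * u + 1) = / 2 * delta (j - 1) u + / 2 * delta (j + 1) (u + 1).
Proof. apply delta_eq, freq_double_add1_lim; apply delta_spec. Qed.

Lemma delta_0 j : delta j 0 = if Z.eqb j 0 then 1 else 0.
Proof. apply delta_eq, freq_0_lim. Qed.

Lemma delta_1 i : delta (1 - Z.of_nat i) 1 = / 2 ^ (i + 1).
Proof. apply delta_eq, freq_1_lim. Qed.

Lemma delta_gt j t : (Z.of_nat t < j)%Z -> delta j t = 0.
Proof. intros Hj. apply delta_eq, freq_gt_lim, Hj. Qed.

Lemma delta_bounds j t : 0 <= delta j t <= 1.
Proof.
  pose proof (delta_spec j t) as H. split.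
  - apply (is_lim_seq_le (fun _ => 0) (freq j t) 0 (delta j t)); auto.
    + intros; apply freq_bounds.
    + apply is_lim_seq_const.
  - apply (is_lim_seq_le (freq j t) (fun _ => 1) (delta j t) 1); auto.
    + intros; apply freq_bounds.
    + apply is_lim_seq_const.
Qed.

Lemma delta_neg_tail t :
  exists C, 0 <= C /\ forall n : nat, delta (- Z.of_nat n) t <= C / 2 ^ n.
Proof.
  induction t as [| | u [C [HC H]] | u _ [C1 [HC1 H1]] [C2 [HC2 H2]]] using binary_ind.
  - exists 1. split; [lra|]. intros n. rewrite delta_0. pose proof (pow_lt 2 n).
    destruct (Z.eqb_spec (- Z.of_nat n) 0) as [Hn|Hn].
    + replace n with 0%nat by lia. simpl. lra.
    + apply Rdiv_le_0_compat; lra.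
  - exists (/ 4). split; [lra|]. intros n.
    replace (- Z.of_nat n)%Z with (1 - Z.of_nat (n + 1))%Z by lia.
    rewrite delta_1, !pow_add. right. simpl. field. apply pow_nonzero. lra.
  - exists C. split; [exact HC|]. intros n. rewrite delta_double. apply H.
  - exists (C1 + C2 + 1). split; [lra|]. intros [|n]; rewrite delta_double_add1.
    + pose proof (delta_bounds (-1) u). pose proof (delta_bounds 1 (u + 1)).
      simpl. rewrite Rdiv_1_r. lra.
    + specialize (H1 (S (S n))). specialize (H2 n).
      replace (- Z.of_nat (S n) - 1)%Z with (- Z.of_nat (S (S n)))%Z by lia.
      replace (- Z.of_nat (S n) + 1)%Z with (- Z.of_nat n)%Z by lia.
      pose proof (pow_lt 2 n ltac:(lra)).
      cbn [pow] in *. unfold Rdiv in *. rewrite !Rinv_mult in *.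
      assert (0 <= / 2 ^ n) by (left; apply Rinv_0_lt_compat; lra).
      nra.
Qed.

(** * Symmetric sums and means *)

Definition sym_sum (g : Z -> R) (M : nat) : R :=
  sum_f_R0 (fun i => g (Z.of_nat i - Z.of_nat M)%Z) (2 * M).

Lemma sym_sum_S g M :
  sym_sum g (S M) = sym_sum g M + g (- Z.of_nat (S M))%Z + g (Z.of_nat (S M)).
Proof.
  unfold sym_sum. replace (2 * S M)%nat with (S (S (2 * M))) by lia.
  rewrite decomp_sum by lia. cbn [Nat.pred]. rewrite tech5.
  rewrite (sum_eq (fun i => g (Z.of_nat (S i) - Z.of_nat (S M))%Z)
                  (fun i => g (Z.of_nat i - Z.of_nat M)%Z))
    by (intros i _; f_equal; lia).
  replace (Z.of_nat 0 - Z.of_nat (S M))%Z with (- Z.of_nat (S M))%Z by lia.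
  replace (Z.of_nat (S (S (2 * M))) - Z.of_nat (S M))%Z with (Z.of_nat (S M)) by lia.
  ring.
Qed.

Lemma sym_sum_ext g h M : (forall j, g j = h j) -> sym_sum g M = sym_sum h M.
Proof. intros H. apply sum_eq. intros; apply H. Qed.

Lemma sym_sum_plus g h M : sym_sum (fun j => g j + h j) M = sym_sum g M + sym_sum h M.
Proof. induction M as [|M IH]; [reflexivity|]. rewrite !sym_sum_S, IH. ring. Qed.

Lemma sym_sum_scal a g M : sym_sum (fun j => a * g j) M = a * sym_sum g M.
Proof. induction M as [|M IH]; [reflexivity|]. rewrite !sym_sum_S, IH. ring. Qed.

Lemma sym_sum_shift_pred g M :
  sym_sum (fun j => g (j - 1)%Z) M = sym_sum g M + g (- Z.of_nat (S M))%Z - g (Z.of_nat M).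
Proof.
  induction M as [|M IH]; [unfold sym_sum; simpl; ring|].
  rewrite !sym_sum_S, IH.
  replace (- Z.of_nat (S M) - 1)%Z with (- Z.of_nat (S (S M)))%Z by lia.
  replace (Z.of_nat (S M) - 1)%Z with (Z.of_nat M) by lia. ring.
Qed.

Lemma sym_sum_shift_succ g M :
  sym_sum (fun j => g (j + 1)%Z) M = sym_sum g M - g (- Z.of_nat M)%Z + g (Z.of_nat (S M)).
Proof.
  induction M as [|M IH]; [unfold sym_sum; simpl; ring|].
  rewrite !sym_sum_S, IH.
  replace (- Z.of_nat (S M) + 1)%Z with (- Z.of_nat M)%Z by lia.
  replace (Z.of_nat (S M) + 1)%Z with (Z.of_nat (S (S M))) by lia. ring.
Qed.

Definition sym_term (g : Z -> R) (n : nat) : R :=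
  match n with
  | O => g 0%Z
  | S _ => g (- Z.of_nat n)%Z + g (Z.of_nat n)
  end.

Lemma sym_sum_sum_n g M : sym_sum g M = sum_n (sym_term g) M.
Proof.
  rewrite sum_n_Reals. induction M as [|M IH]; [reflexivity|].
  rewrite sym_sum_S, tech5, IH. simpl. ring.
Qed.

Definition cubic_weight (n : nat) : R := (INR n ^ 3 + 1) / 2 ^ n.

Lemma cubic_weight_ge0 n : 0 <= cubic_weight n.
Proof.
  apply Rdiv_le_0_compat; [pose proof (pos_INR n); nra | apply pow_lt; lra].
Qed.

Lemma sum_cubic_weight M :
  sum_f_R0 cubic_weight M = 28 - (INR M ^ 3 + 6 * INR M ^ 2 + 18 * INR M + 27) / 2 ^ M.
Proof.
  induction M as [|M IH]; [unfold cubic_weight; simpl; field|].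
  rewrite tech5, IH. unfold cubic_weight. rewrite S_INR. simpl (2 ^ S M).
  field. apply pow_nonzero. lra.
Qed.

Lemma ex_series_cubic_weight : ex_series cubic_weight.
Proof.
  apply ex_finite_lim_seq_incr with 28.
  - intros n. rewrite sum_Sn. pose proof (cubic_weight_ge0 (S n)). unfold plus. simpl. lra.
  - intros n. rewrite sum_n_Reals, sum_cubic_weight.
    assert (0 <= (INR n ^ 3 + 6 * INR n ^ 2 + 18 * INR n + 27) / 2 ^ n).
    { apply Rdiv_le_0_compat; [pose proof (pos_INR n); nra | apply pow_lt; lra]. }
    lra.
Qed.

Definition cubic_growth (f : Z -> R) : Prop :=
  exists c, 0 <= c /\ forall j, Rabs (f j) <= c * (Rabs (IZR j) ^ 3 + 1).

Lemma cubic_growth_pow r : (r <= 3)%nat -> cubic_growth (fun j => IZR j ^ r).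
Proof.
  intros Hr. exists 1. split; [lra|]. intros j. rewrite <- RPow_abs, Rmult_1_l.
  pose proof (Rabs_pos (IZR j)). set (x := Rabs (IZR j)) in *.
  destruct r as [|[|[|[|r]]]]; simpl; try lia; destruct (Rle_dec x 1); nra.
Qed.

Lemma cubic_growth_shift f a : Rabs (IZR a) <= 1 -> cubic_growth f -> cubic_growth (fun j => f (j + a)%Z).
Proof.
  intros Ha [c [Hc0 Hc]]. exists (8 * c). split; [lra|]. intros j.
  pose proof (Hc (j + a)%Z) as Hja.
  assert (Hx : Rabs (IZR (j + a)) <= Rabs (IZR j) + 1).
  { rewrite plus_IZR. pose proof (Rabs_triang (IZR j) (IZR a)). lra. }
  pose proof (Rabs_pos (IZR (j + a))). pose proof (Rabs_pos (IZR j)).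
  set (x := Rabs (IZR j)) in *. set (y := Rabs (IZR (j + a))) in *.
  assert (y ^ 3 <= (x + 1) ^ 3) by (apply pow_incr; lra).
  assert ((x + 1) ^ 3 + 1 <= 8 * (x ^ 3 + 1)) by (destruct (Rle_dec x 1); nra).
  nra.
Qed.

Lemma delta_neg_cubic_bound t f : cubic_growth f ->
  exists B, forall n : nat, Rabs (delta (- Z.of_nat n) t * f (- Z.of_nat n)%Z) <= B * cubic_weight n.
Proof.
  intros [c [_ Hc]]. destruct (delta_neg_tail t) as [C [HC Htail]].
  exists (C * c). intros n.
  pose proof (delta_bounds (- Z.of_nat n) t). pose proof (Htail n). pose proof (pow_lt 2 n ltac:(lra)).
  specialize (Hc (- Z.of_nat n)%Z).
  rewrite opp_IZR, Rabs_Ropp, <- INR_IZR_INZ, (Rabs_right (INR n)) in Hc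
    by apply Rle_ge, pos_INR.
  rewrite Rabs_mult, (Rabs_right (delta _ t)) by lra.
  unfold cubic_weight.
  replace (C * c * ((INR n ^ 3 + 1) / 2 ^ n)) with (C / 2 ^ n * (c * (INR n ^ 3 + 1))) by (field; lra).
  apply Rmult_le_compat; [lra | apply Rabs_pos | lra | exact Hc].
Qed.

Lemma delta_pos_cubic_bound t f : cubic_growth f ->
  exists B, forall n : nat, Rabs (delta (Z.of_nat n) t * f (Z.of_nat n)) <= B * cubic_weight n.
Proof.
  intros [c [Hc0 Hc]]. exists (2 ^ t * c). intros n.
  pose proof (pow_lt 2 t ltac:(lra)).
  destruct (le_lt_dec n t) as [Hn|Hn].
  2:{ rewrite delta_gt by lia. rewrite Rmult_0_l, Rabs_R0.
      apply Rmult_le_pos; [nra | apply cubic_weight_ge0]. }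
  pose proof (delta_bounds (Z.of_nat n) t). pose proof (pow_lt 2 n ltac:(lra)).
  specialize (Hc (Z.of_nat n)).
  rewrite <- INR_IZR_INZ, (Rabs_right (INR n)) in Hc by apply Rle_ge, pos_INR.
  assert (Hpow : 2 ^ n <= 2 ^ t) by (apply Rle_pow; [lra | exact Hn]).
  assert (H0c : 0 <= c * (INR n ^ 3 + 1)) by (pose proof (Rabs_pos (f (Z.of_nat n))); lra).
  rewrite Rabs_mult, (Rabs_right (delta _ t)) by lra.
  unfold cubic_weight.
  replace (2 ^ t * c * ((INR n ^ 3 + 1) / 2 ^ n)) with (2 ^ t / 2 ^ n * (c * (INR n ^ 3 + 1))) by (field; lra).
  apply Rmult_le_compat; [lra | apply Rabs_pos | | exact Hc].
  apply Rle_trans with 1; [lra|]. apply Rle_div_r; lra.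
Qed.

Definition mean (t : nat) (f : Z -> R) : R :=
  real (Lim_seq (sym_sum (fun j => delta j t * f j))).

Lemma mean_eq t f (l : R) : is_lim_seq (sym_sum (fun j => delta j t * f j)) l -> mean t f = l.
Proof. intros H. unfold mean. rewrite (is_lim_seq_unique _ _ H). reflexivity. Qed.

Lemma mean_spec t f : cubic_growth f ->
  is_lim_seq (sym_sum (fun j => delta j t * f j)) (mean t f).
Proof.
  intros Hf.
  destruct (delta_neg_cubic_bound t f Hf) as [B1 H1], (delta_pos_cubic_bound t f Hf) as [B2 H2].
  set (g j := delta j t * f j).
  assert (Hser : ex_series (sym_term g)).
  { apply (@ex_series_le R_AbsRing R_CompleteNormedModule _ (fun n => (B1 + B2) * cubic_weight n)).
    - intros n. change (Rabs (sym_term g n) <= (B1 + B2) * cubic_weight n).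
      specialize (H1 n). specialize (H2 n). pose proof (Rabs_pos (g 0%Z)).
      assert (Rabs (sym_term g n) <= Rabs (g (- Z.of_nat n)%Z) + Rabs (g (Z.of_nat n))).
      { destruct n; [simpl; lra | apply Rabs_triang]. }
      unfold g in *. lra.
    - apply (ex_series_scal_l (B1 + B2) cubic_weight), ex_series_cubic_weight. }
  assert (Hlim : is_lim_seq (sym_sum g) (Series (sym_term g))).
  { apply is_lim_seq_ext with (sum_n (sym_term g)); [intros; symmetry; apply sym_sum_sum_n|].
    apply Series_correct, Hser. }
  rewrite (mean_eq _ _ _ Hlim). exact Hlim.
Qed.

Lemma mean_ext t f h : (forall j, f j = h j) -> mean t f = mean t h.
Proof.
  intros H. unfold mean. f_equal. apply Lim_seq_ext. intros M.
  apply sym_sum_ext. intros j. rewrite H. reflexivity.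
Qed.

Lemma mean_double u f : mean (2 * u) f = mean u f.
Proof.
  unfold mean. f_equal. apply Lim_seq_ext. intros M.
  apply sym_sum_ext. intros j. rewrite delta_double. reflexivity.
Qed.

Lemma mean_0 f : mean 0 f = f 0%Z.
Proof.
  apply mean_eq, is_lim_seq_ext with (fun _ => f 0%Z); [|apply is_lim_seq_const].
  intros M. induction M as [|M IH].
  - unfold sym_sum. simpl. rewrite delta_0. simpl. ring.
  - rewrite sym_sum_S, <- IH, !delta_0.
    replace (Z.eqb (- Z.of_nat (S M)) 0) with false by (symmetry; apply Z.eqb_neq; lia).
    replace (Z.eqb (Z.of_nat (S M)) 0) with false by (symmetry; apply Z.eqb_neq; lia).
    ring.
Qed.

Lemma delta_neg_negligible t f : cubic_growth f ->
  is_lim_seq (fun n => delta (- Z.of_nat n) t * f (- Z.of_nat n)%Z) 0.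
Proof.
  intros Hf. destruct (delta_neg_cubic_bound t f Hf) as [B HB].
  apply (is_lim_seq_dominated_0 _ _ B HB), ex_series_lim_0, ex_series_cubic_weight.
Qed.

Lemma delta_pos_negligible t g : is_lim_seq (fun n => delta (Z.of_nat n) t * g (Z.of_nat n)) 0.
Proof.
  apply is_lim_seq_ext_loc with (fun _ => 0); [|apply is_lim_seq_const].
  exists (S t). intros n Hn. rewrite delta_gt by lia. ring.
Qed.

Lemma mean_double_add1 u f : cubic_growth f ->
  mean (2 * u + 1) f =
  / 2 * mean u (fun j => f (j + 1)%Z) + / 2 * mean (u + 1) (fun j => f (j - 1)%Z).
Proof.
  intros Hf.
  set (g1 j := delta j u * f (j + 1)%Z). set (g2 j := delta j (u + 1) * f (j - 1)%Z).
  apply mean_eq.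
  apply is_lim_seq_ext with (fun M =>
      / 2 * (sym_sum g1 M + g1 (- Z.of_nat (S M))%Z - g1 (Z.of_nat M))
    + / 2 * (sym_sum g2 M - g2 (- Z.of_nat M)%Z + g2 (Z.of_nat (S M)))).
  { intros M. rewrite <- sym_sum_shift_pred, <- sym_sum_shift_succ, <- !sym_sum_scal, <- sym_sum_plus.
    apply sym_sum_ext. intros j. unfold g1, g2. rewrite delta_double_add1.
    replace (j - 1 + 1)%Z with j by ring. replace (j + 1 - 1)%Z with j by ring. ring. }
  assert (Hf1 : cubic_growth (fun j => f (j + 1)%Z))
    by (apply cubic_growth_shift; [rewrite Rabs_R1; lra | exact Hf]).
  assert (Hf2 : cubic_growth (fun j => f (j - 1)%Z))
    by (apply (cubic_growth_shift f (-1)); [rewrite Rabs_left; lra | exact Hf]).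
  assert (Hneg1 := proj1 (is_lim_seq_incr_1 _ _) (delta_neg_negligible u _ Hf1)).
  assert (Hneg2 := delta_neg_negligible (u + 1) _ Hf2).
  assert (Hpos1 := delta_pos_negligible u (fun j => f (j + 1)%Z)).
  assert (Hpos2 := proj1 (is_lim_seq_incr_1 _ _) (delta_pos_negligible (u + 1) (fun j => f (j - 1)%Z))).
  replace (/ 2 * mean u (fun j => f (j + 1)%Z) + / 2 * mean (u + 1) (fun j => f (j - 1)%Z))
    with (/ 2 * (mean u (fun j => f (j + 1)%Z) + 0 - 0) + / 2 * (mean (u + 1) (fun j => f (j - 1)%Z) - 0 + 0))
    by ring.
  apply is_lim_seq_plus'; apply is_lim_seq_scal_fin.
  - apply is_lim_seq_minus'; [apply is_lim_seq_plus'; [apply mean_spec, Hf1|]|]; assumption.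
  - apply is_lim_seq_plus'; [apply is_lim_seq_minus'; [apply mean_spec, Hf2|]|]; assumption.
Qed.

(** * Moments and [D] *)

Lemma moment_mean r t : moment r t = mean t (fun j => IZR j ^ r).
Proof. reflexivity. Qed.

Lemma mean_poly3 t c0 c1 c2 c3 f :
  (forall j, f j = c0 + c1 * IZR j + c2 * IZR j ^ 2 + c3 * IZR j ^ 3) ->
  mean t f = c0 * moment 0 t + c1 * moment 1 t + c2 * moment 2 t + c3 * moment 3 t.
Proof.
  intros Hf. apply mean_eq.
  apply is_lim_seq_ext with (fun M =>
      c0 * sym_sum (fun j => delta j t * IZR j ^ 0) M + c1 * sym_sum (fun j => delta j t * IZR j ^ 1) M
    + c2 * sym_sum (fun j => delta j t * IZR j ^ 2) M + c3 * sym_sum (fun j => delta j t * IZR j ^ 3) M).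
  { intros M. rewrite <- !sym_sum_scal, <- !sym_sum_plus. apply sym_sum_ext. intros j.
    rewrite Hf. simpl. ring. }
  repeat apply is_lim_seq_plus'; apply is_lim_seq_scal_fin, (mean_spec t (fun j => IZR j ^ _));
    apply cubic_growth_pow; lia.
Qed.

Lemma moment_double r u : moment r (2 * u) = moment r u.
Proof. rewrite !moment_mean. apply mean_double. Qed.

Lemma moment_pow2_mul r i p : moment r (2 ^ i * p) = moment r p.
Proof.
  induction i as [|i IH]; [f_equal; simpl; lia|].
  rewrite Nat.pow_succ_r', <- Nat.mul_assoc, moment_double. exact IH.
Qed.

Lemma moment_0 r : moment r 0 = 0 ^ r.
Proof. rewrite moment_mean. apply mean_0. Qed.

Lemma moment_double_add1 r u : (r <= 3)%nat ->
  moment r (2 * u + 1) =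
  / 2 * mean u (fun j => (IZR j + 1) ^ r) + / 2 * mean (u + 1) (fun j => (IZR j - 1) ^ r).
Proof.
  intros Hr. rewrite moment_mean, mean_double_add1 by (apply cubic_growth_pow, Hr).
  f_equal; f_equal; apply mean_ext; intros j; rewrite ?plus_IZR, ?minus_IZR; reflexivity.
Qed.

Lemma moment0_eq1 t : moment 0 t = 1.
Proof.
  assert (Hodd : forall u, moment 0 (2 * u + 1) = / 2 * moment 0 u + / 2 * moment 0 (u + 1)).
  { intros u. rewrite moment_double_add1 by lia.
    rewrite (mean_poly3 u 1 0 0 0), (mean_poly3 (u + 1) 1 0 0 0) by (intros; ring). ring. }
  induction t as [| | u IH | u _ IH1 IH2] using binary_ind.
  - rewrite moment_0. reflexivity.
  - specialize (Hodd 0%nat). rewrite moment_0 in Hodd. simpl in Hodd. lra.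
  - rewrite moment_double. exact IH.
  - rewrite Hodd, IH1, IH2. field.
Qed.

Lemma moment1_eq0 t : moment 1 t = 0.
Proof.
  assert (Hodd : forall u, moment 1 (2 * u + 1) = / 2 * moment 1 u + / 2 * moment 1 (u + 1)).
  { intros u. rewrite moment_double_add1 by lia.
    rewrite (mean_poly3 u 1 1 0 0), (mean_poly3 (u + 1) (-1) 1 0 0) by (intros; ring).
    rewrite !moment0_eq1. ring. }
  induction t as [| | u IH | u _ IH1 IH2] using binary_ind.
  - rewrite moment_0. simpl. ring.
  - specialize (Hodd 0%nat). rewrite moment_0 in Hodd. simpl in Hodd. lra.
  - rewrite moment_double. exact IH.
  - rewrite Hodd, IH1, IH2. field.
Qed.

Lemma moment2_double_add1 u :
  moment 2 (2 * u + 1) = (moment 2 u + moment 2 (u + 1)) / 2 + 1.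
Proof.
  rewrite moment_double_add1 by lia.
  rewrite (mean_poly3 u 1 2 1 0), (mean_poly3 (u + 1) 1 (-2) 1 0) by (intros; ring).
  rewrite !moment0_eq1, !moment1_eq0. field.
Qed.

Lemma moment3_double_add1 u :
  moment 3 (2 * u + 1) =
  (moment 3 u + moment 3 (u + 1)) / 2 + 3 / 2 * (moment 2 u - moment 2 (u + 1)).
Proof.
  rewrite moment_double_add1 by lia.
  rewrite (mean_poly3 u 1 3 3 1), (mean_poly3 (u + 1) (-1) 3 (-3) 1) by (intros; ring).
  rewrite !moment0_eq1, !moment1_eq0. field.
Qed.

Lemma D_moments t : D t = moment 2 t - moment 3 t / 3.
Proof. unfold D, kappa2, kappa3. rewrite moment1_eq0. field. Qed.

Lemma D_double u : D (2 * u) = D u.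
Proof. rewrite !D_moments, !moment_double. reflexivity. Qed.

Lemma D_pow2_mul i p : D (2 ^ i * p) = D p.
Proof. rewrite !D_moments, !moment_pow2_mul. reflexivity. Qed.

Lemma D_double_add1 u :
  D (2 * u + 1) = (D u + D (u + 1)) / 2 + 1 - (moment 2 u - moment 2 (u + 1)) / 2.
Proof. rewrite !D_moments, moment2_double_add1, moment3_double_add1. field. Qed.

Lemma moment2_sub_succ_le t : moment 2 t - moment 2 (t + 1) <= 2.
Proof.
  induction t as [| | u IH | u _ IH _] using binary_ind.
  - pose proof (moment2_double_add1 0). simpl in *. lra.
  - change (1 + 1)%nat with (2 * 1)%nat. rewrite moment_double. lra.
  - rewrite moment_double, moment2_double_add1. lra.
  - replace (2 * u + 1 + 1)%nat with (2 * (u + 1))%nat by lia.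
    rewrite moment_double, moment2_double_add1. lra.
Qed.

(* The binary expansion of [tail_ones t i] is that of [t] followed by a 0 and [i] ones. *)
Definition tail_ones (t i : nat) : nat := (2 ^ (i + 1) * t + 2 ^ i - 1)%nat.

Lemma tail_ones_0 t : tail_ones t 0 = (2 * t)%nat.
Proof. unfold tail_ones. simpl. lia. Qed.

Lemma tail_ones_S t i : tail_ones t (S i) = (2 * tail_ones t i + 1)%nat.
Proof.
  unfold tail_ones. pose proof (Nat.pow_nonzero 2 i ltac:(lia)).
  rewrite !Nat.add_1_r, !Nat.pow_succ_r'. nia.
Qed.

Lemma tail_ones_add1 t i : (tail_ones t i + 1)%nat = (2 ^ i * (2 * t + 1))%nat.
Proof.
  unfold tail_ones. pose proof (Nat.pow_nonzero 2 i ltac:(lia)).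
  rewrite Nat.pow_add_r. simpl. nia.
Qed.

Section TailOnes.
Variable t : nat.
Let beta := (moment 2 t - moment 2 (t + 1)) / 2 - 3.

Lemma moment2_tail_ones i : moment 2 (tail_ones t i) = moment 2 (2 * t + 1) + 2 + beta / 2 ^ i.
Proof.
  induction i as [|i IH].
  - rewrite tail_ones_0, moment_double, moment2_double_add1. unfold beta. simpl. field.
  - rewrite tail_ones_S, moment2_double_add1, tail_ones_add1, moment_pow2_mul, IH.
    simpl. field. apply pow_nonzero. lra.
Qed.

Lemma D_tail_ones i :
  D (tail_ones t i) = D (2 * t + 1) + (D t - D (2 * t + 1) - INR i * beta) / 2 ^ i.
Proof.
  induction i as [|i IH].
  - rewrite tail_ones_0, D_double. simpl. field.
  - rewrite tail_ones_S, D_double_add1, tail_ones_add1, D_pow2_mul, moment_pow2_mul,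
      moment2_tail_ones, IH, S_INR.
    simpl. field. apply pow_nonzero. lra.
Qed.

Lemma D_tail_ones_ge i : m t + 2 * INR i / 2 ^ i <= D (tail_ones t i).
Proof.
  rewrite D_tail_ones. unfold m.
  set (mu := Rmin (D t) (D (S t))).
  assert (H1 : mu <= D t) by apply Rmin_l.
  assert (H2 : mu <= D (t + 1)) by (rewrite Nat.add_1_r; apply Rmin_r).
  assert (Hbeta : beta <= -2) by (pose proof (moment2_sub_succ_le t); unfold beta; lra).
  assert (Hodd : D (2 * t + 1) - mu >= - beta - 2)
    by (rewrite D_double_add1; unfold beta; lra).
  assert (Hw1 : 1 <= 2 ^ i) by (apply pow_R1_Rle; lra).
  set (w := / 2 ^ i).
  assert (Hw : 0 < w <= 1)
    by (split; [apply Rinv_0_lt_compat; lra | unfold w; rewrite <- Rinv_1; apply Rinv_le_contravar; lra]).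
  pose proof (pos_INR i).
  unfold Rdiv. fold w.
  (* [D (tail_ones t i) - mu - 2 i w] is the sum of the three nonnegative terms below. *)
  assert (0 <= (1 - w) * (D (2 * t + 1) - mu)) by (apply Rmult_le_pos; lra).
  assert (0 <= w * (D t - mu)) by (apply Rmult_le_pos; lra).
  assert (0 <= INR i * w * (- beta - 2)) by (apply Rmult_le_pos; [apply Rmult_le_pos|]; lra).
  nra.
Qed.

End TailOnes.

Theorem corollary2p12 (t k : nat) (hk : (1 <= k)%nat) :
  m (2 ^ (k + 2) * t + 2 ^ (k + 1) - 2)%nat >= m t + INR k / 2 ^ k.
Proof.
  replace (2 ^ (k + 2) * t + 2 ^ (k + 1) - 2)%nat with (2 * tail_ones t k)%nat.
  2:{ unfold tail_ones. pose proof (Nat.pow_nonzero 2 k ltac:(lia)).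
      rewrite !Nat.pow_add_r. simpl. nia. }
  unfold m at 1. rewrite D_double, <- Nat.add_1_r, <- tail_ones_S.
  pose proof (D_tail_ones_ge t k) as Hk. pose proof (D_tail_ones_ge t (S k)) as HSk.
  rewrite S_INR in HSk. simpl pow in HSk.
  pose proof (pow_lt 2 k ltac:(lra)). pose proof (pos_INR k).
  assert (INR k / 2 ^ k <= 2 * INR k / 2 ^ k) by (apply Rmult_le_compat_r; [left; apply Rinv_0_lt_compat|]; lra).
  assert (INR k / 2 ^ k <= 2 * (INR k + 1) / (2 * 2 ^ k)).
  { rewrite <- (Rdiv_mult_l_l 2) by lra. apply Rmult_le_compat_r; [left; apply Rinv_0_lt_compat|]; lra. }
  apply Rle_ge, Rmin_glb; lra.
Qed.
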